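(* Let $\mathcal{X}\subseteq\mathbb{R}^d$ be a nonempty closed convex set and consider the iterates $x_t,z_t$ and step sizes $\gamma_t$ of Algorithm AdaPEG (described in the context), run with arbitrary oracle answers $\widehat{F(x_t)}\in\mathbb{R}^d$. Then for every $t\ge1$, \[\langle\widehat{F(x_t)}-\widehat{F(x_{t-1})},x_t-z_t\rangle\le\frac1{\gamma_t}\left\|\widehat{F(x_t)}-\widehat{F(x_{t-1})}\right\|^2.\]
   Context: $\|\cdot\|$ is the Euclidean norm. Algorithm AdaPEG: $x_0=z_0\in\mathcal{X}$, $\gamma_0\ge0$, $\eta>0$. For $t=1,\dots,T$: $x_t=\arg\min_{u\in\mathcal{X}}\{\langle\widehat{F(x_{t-1})},u\rangle+\tfrac12\gamma_{t-1}\|u-z_{t-1}\|^2\}$; $\gamma_t=\frac1\eta\sqrt{\eta^2\gamma_0^2+\sum_{s=1}^t\|\widehat{F(x_s)}-\widehat{F(x_{s-1})}\|^2}$; $z_t=\arg\min_{u\in\mathcal{X}}\{\langle\widehat{F(x_t)},u\rangle+\tfrac12\gamma_{t-1}\|u-z_{t-1}\|^2+\tfrac12(\gamma_t-\gamma_{t-1})\|u-x_t\|^2\}$. *)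

From HB Require Import structures.
From mathcomp Require Import all_boot all_order all_algebra.
From mathcomp Require Import all_classical all_reals all_analysis.
Set Implicit Arguments. Unset Strict Implicit. Unset Printing Implicit Defensive.
Import Order.TTheory GRing.Theory Num.Theory.
Import numFieldNormedType.Exports.
Local Open Scope classical_set_scope.
Local Open Scope ring_scope.

Definition dotp {R : realType} {d : nat} (u v : 'rV[R]_d) : R :=
  \sum_(i < d) u ord0 i * v ord0 i.

Definition enorm {R : realType} {d : nat} (u : 'rV[R]_d) : R :=
  Num.sqrt (dotp u u).

Definition convex_set_Rd {R : realType} {d : nat} (X : set 'rV[R]_d) : Prop :=
  forall x y : 'rV[R]_d, X x -> X y -> forall l : R, 0 <= l -> l <= 1 ->
    X (l *: x + (1 - l) *: y).

Definition is_argmin {R : realType} {d : nat} (X : set 'rV[R]_d)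
  (f : 'rV[R]_d -> R) (u : 'rV[R]_d) : Prop :=
  X u /\ forall v, X v -> f u <= f v.

(* The AdaPEG recursion, with oracle answers g t = \widehat{F(x_t)}. *)
Definition AdaPEG {R : realType} {d : nat} (X : set 'rV[R]_d)
  (gamma0 eta : R) (g : nat -> 'rV[R]_d)
  (x z : nat -> 'rV[R]_d) (gamma : nat -> R) : Prop :=
  [/\ x 0%N = z 0%N /\ X (x 0%N), gamma 0%N = gamma0,
      (forall t : nat, (1 <= t)%N ->
         is_argmin X (fun u => dotp (g t.-1) u
                        + 2^-1 * gamma t.-1 * enorm (u - z t.-1) ^+ 2) (x t)),
      (forall t : nat, (1 <= t)%N ->
         gamma t = eta^-1 * Num.sqrt (eta ^+ 2 * gamma0 ^+ 2
                     + \sum_(1 <= s < t.+1) enorm (g s - g s.-1) ^+ 2)) &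
      (forall t : nat, (1 <= t)%N ->
         is_argmin X (fun u => dotp (g t) u
                        + 2^-1 * gamma t.-1 * enorm (u - z t.-1) ^+ 2
                        + 2^-1 * (gamma t - gamma t.-1) * enorm (u - x t) ^+ 2) (z t))].

(** Both AdaPEG steps are minimizers over the convex set X, so their
    directional derivatives towards any point of X are nonnegative.  Testing
    the optimality of x_t in the direction of z_t and that of z_t in the
    direction of x_t, and adding, the gamma_(t-1) terms cancel and leave
    gamma_t |x_t - z_t|^2 <= <g_t - g_(t-1), x_t - z_t>.  Expanding
    0 <= |(g_t - g_(t-1)) - gamma_t (x_t - z_t)|^2 turns this coercivity into
    the claimed bound; when gamma_t = 0 the step-size formula forces
    g_t = g_(t-1). *)

From HB Require Import structures.
From mathcomp Require Import all_boot all_order all_algebra.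
From mathcomp Require Import all_classical all_reals all_analysis.
From mathcomp Require Import ring lra.
Import Order.TTheory GRing.Theory Num.Theory.
Import numFieldNormedType.Exports.
Local Open Scope classical_set_scope.
Local Open Scope ring_scope.

Section InnerProduct.
Context {R : realType} {d : nat}.
Implicit Types (u v w : 'rV[R]_d) (k : R).

Lemma dotpC u v : dotp u v = dotp v u.
Proof. by apply: eq_bigr => i _; rewrite mulrC. Qed.

Lemma dotpDl u v w : dotp (u + v) w = dotp u w + dotp v w.
Proof. by rewrite /dotp -big_split; apply: eq_bigr => i _; rewrite mxE mulrDl. Qed.

Lemma dotpZl k u v : dotp (k *: u) v = k * dotp u v.
Proof. by rewrite /dotp mulr_sumr; apply: eq_bigr => i _; rewrite mxE mulrA. Qed.

Lemma dotpBl u v w : dotp (u - v) w = dotp u w - dotp v w.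
Proof. by rewrite dotpDl -scaleN1r dotpZl mulN1r. Qed.

Lemma dotpDr u v w : dotp w (u + v) = dotp w u + dotp w v.
Proof. by rewrite dotpC dotpDl !(dotpC w). Qed.

Lemma dotpZr k u v : dotp v (k *: u) = k * dotp v u.
Proof. by rewrite dotpC dotpZl dotpC. Qed.

Lemma dotpBr u v w : dotp w (u - v) = dotp w u - dotp w v.
Proof. by rewrite dotpC dotpBl !(dotpC w). Qed.

Lemma dotp0l u : dotp 0 u = 0.
Proof. by rewrite -(scale0r 0) dotpZl mul0r. Qed.

Lemma dotpvv_ge0 u : 0 <= dotp u u.
Proof. by apply: sumr_ge0 => i _; rewrite -expr2 sqr_ge0. Qed.

Lemma dotpvv_eq0 u : dotp u u = 0 -> u = 0.
Proof.
move=> /eqP; rewrite psumr_eq0 => [/allP u0|i _]; last by rewrite -expr2 sqr_ge0.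
apply/rowP => i; rewrite mxE; apply/eqP.
by rewrite -sqrf_eq0 expr2; apply: (implyP (u0 i (mem_index_enum i))).
Qed.

Lemma sqr_enorm u : enorm u ^+ 2 = dotp u u.
Proof. by rewrite /enorm sqr_sqrtr // dotpvv_ge0. Qed.

Lemma dotp_shift u h k :
  dotp (u + k *: h) (u + k *: h) = dotp u u + 2 * k * dotp u h + k ^+ 2 * dotp h h.
Proof. by rewrite !dotpDl !dotpDr !dotpZl !dotpZr (dotpC h u); ring. Qed.

Lemma dotp_le_divr_of_coercive (G : R) u w :
  0 <= G -> G * dotp w w <= dotp u w -> (G = 0 -> u = 0) ->
  dotp u w <= G^-1 * dotp u u.
Proof.
rewrite le0r => /orP[/eqP-> _ /(_ erefl)-> | G_gt0 coer _].
  by rewrite dotp0l invr0 mul0r.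
have sq_ge0 := dotpvv_ge0 (u + (- G) *: w); rewrite dotp_shift sqrrN in sq_ge0.
have coerG := ler_wpM2l (ltW G_gt0) coer.
by rewrite ler_pdivlMl //; nra.
Qed.

End InnerProduct.

Lemma lin_coef_ge0 (R : realFieldType) (A B : R) :
  (forall l : R, 0 < l -> l <= 1 -> 0 <= l * A + l ^+ 2 * B) -> 0 <= A.
Proof.
move=> small_ge0; rewrite leNgt; apply/negP => A_lt0.
pose k := `|B| + 1; pose l := - A / (k - A).
have k_gt0 : 0 < k by rewrite ltr_pwDr.
have kA_gt0 : 0 < k - A by rewrite subr_gt0 (lt_trans A_lt0).
have l_gt0 : 0 < l by rewrite divr_gt0 // oppr_gt0.
have lkA : l * (k - A) = - A by rewrite mulfVK ?gt_eqF.
have l_le1 : l <= 1 by rewrite ler_pdivrMr // mul1r; lra.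
have B_le : B <= k - 1 by rewrite /k addrK real_ler_norm ?num_real.
have := small_ge0 l l_gt0 l_le1.
have : l ^+ 2 * B <= l ^+ 2 * (k - 1) by rewrite ler_wpM2l ?sqr_ge0.
rewrite expr2; nra.
Qed.

Section ConvexArgmin.
Context {R : realType} {d : nat} {X : set 'rV[R]_d}.
Hypothesis convX : convex_set_Rd X.

Lemma argmin_dir_ge0 (f : 'rV[R]_d -> R) u v (L Q : R) :
  is_argmin X f u -> X v ->
  (forall l, f (u + l *: (v - u)) = f u + l * L + l ^+ 2 * Q) -> 0 <= L.
Proof.
move=> [Xu u_min] Xv f_exp; apply: (@lin_coef_ge0 _ _ Q) => l l_gt0 l_le1.
have Xul : X (u + l *: (v - u)).
  have := convX _ _ Xv Xu _ (ltW l_gt0) l_le1.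
  by rewrite scalerBl scale1r scalerBr addrCA addrC.
by have := u_min _ Xul; rewrite f_exp; lra.
Qed.

Definition prox_term (a : R) (w u : 'rV[R]_d) : R := 2^-1 * a * enorm (u - w) ^+ 2.

Lemma prox_term_shift a w u h l :
  prox_term a w (u + l *: h) =
  prox_term a w u + l * (a * dotp (u - w) h) + l ^+ 2 * (2^-1 * a * dotp h h).
Proof. by rewrite /prox_term addrAC !sqr_enorm dotp_shift; field. Qed.

Lemma prox_step_opt {c a w u v} :
  is_argmin X (fun y => dotp c y + prox_term a w y) u -> X v ->
  0 <= dotp c (v - u) + a * dotp (u - w) (v - u).
Proof.
move=> u_min Xv.
apply: (@argmin_dir_ge0 _ _ _ _ (2^-1 * a * dotp (v - u) (v - u)) u_min Xv) => l.
by rewrite dotpDr dotpZr prox_term_shift; ring.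
Qed.

Lemma prox2_step_opt {c a w b w' u v} :
  is_argmin X (fun y => dotp c y + prox_term a w y + prox_term b w' y) u -> X v ->
  0 <= dotp c (v - u) + a * dotp (u - w) (v - u) + b * dotp (u - w') (v - u).
Proof.
move=> u_min Xv.
apply: (@argmin_dir_ge0 _ _ _ _ (2^-1 * (a + b) * dotp (v - u) (v - u)) u_min Xv) => l.
by rewrite dotpDr dotpZr !prox_term_shift; ring.
Qed.

End ConvexArgmin.

Section AdaPEGStep.
Context {R : realType} {d : nat} {X : set 'rV[R]_d}.
Context {gamma0 eta : R} {g x z : nat -> 'rV[R]_d} {gamma : nat -> R}.
Hypotheses (convX : convex_set_Rd X) (eta_gt0 : 0 < eta).
Hypothesis run : AdaPEG X gamma0 eta g x z gamma.

Lemma AdaPEG_gamma_ge0 t : (1 <= t)%N -> 0 <= gamma t.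
Proof.
case: run => _ _ _ gammaE _ t_ge1.
by rewrite gammaE // mulr_ge0 ?sqrtr_ge0 // invr_ge0 ltW.
Qed.

Lemma AdaPEG_gamma_eq0 t : (1 <= t)%N -> gamma t = 0 -> g t = g t.-1.
Proof.
case: run => _ _ _ gammaE _; case: t => // n _; rewrite gammaE // => /eqP.
rewrite mulf_eq0 invr_eq0 gt_eqF //= sqrtr_eq0 big_nat_recr //= sqr_enorm.
have older_ge0 : 0 <= \sum_(1 <= s < n.+1) enorm (g s - g s.-1) ^+ 2.
  by apply: sumr_ge0 => s _; rewrite sqr_ge0.
have init_ge0 : 0 <= eta ^+ 2 * gamma0 ^+ 2 by rewrite mulr_ge0 ?sqr_ge0.
have last_ge0 := dotpvv_ge0 (g n.+1 - g n).
move=> sum_le0; apply/eqP; rewrite -subr_eq0; apply/eqP/dotpvv_eq0; lra.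
Qed.

Lemma AdaPEG_coercive t : (1 <= t)%N ->
  gamma t * dotp (x t - z t) (x t - z t) <= dotp (g t - g t.-1) (x t - z t).
Proof.
case: run => _ _ x_min _ z_min t_ge1.
have [Xx _] := x_min t t_ge1; have [Xz _] := z_min t t_ge1.
have x_opt := prox_step_opt convX (x_min t t_ge1) Xz.
have z_opt := prox2_step_opt convX (z_min t t_ge1) Xx.
rewrite /= !dotpBl !dotpBr in x_opt z_opt *.
rewrite !(dotpC (x t) (z t)) !(dotpC (z t.-1) (x t)) !(dotpC (z t.-1) (z t))
  in x_opt z_opt *.
lra.
Qed.

End AdaPEGStep.

Theorem lemmaB4 (R : realType) (d : nat) (X : set 'rV[R]_d)
  (gamma0 eta : R) (g : nat -> 'rV[R]_d)
  (x z : nat -> 'rV[R]_d) (gamma : nat -> R) :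
  X !=set0 -> closed X -> convex_set_Rd X ->
  0 <= gamma0 -> 0 < eta ->
  AdaPEG X gamma0 eta g x z gamma ->
  forall t : nat, (1 <= t)%N ->
    dotp (g t - g t.-1) (x t - z t) <= (gamma t)^-1 * enorm (g t - g t.-1) ^+ 2.
Proof.
move=> _ _ convX _ eta_gt0 run t t_ge1.
rewrite sqr_enorm; apply: dotp_le_divr_of_coercive.
- exact: AdaPEG_gamma_ge0 eta_gt0 run t t_ge1.
- exact: AdaPEG_coercive convX run t t_ge1.
- by move=> /(AdaPEG_gamma_eq0 eta_gt0 run t t_ge1) ->; rewrite subrr.
Qed.
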